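(* Let $b\ge 2$ and $k\ge 1$ be integers, set $B=b^k$, let $m\ge 1$ be an integer with $\gcd(m,b)=1$, and let $r$ be an integer with $0\le r<m$. Let $s\ge 1$ be an integer with $s\equiv r\pmod m$ and $\gcd(s,b)=1$. Define $\omega_s:=\operatorname{ord}_{ms}(B)$ and \[ n_s:=\sum_{j=0}^{s-1} B^{j\omega_s}. \] Then: (1) $n_s\equiv r\pmod{m}$; (2) $\mathsf{s}_B(n_s)=\mathsf{s}_b(n_s)=s$; (3) $s\mid n_s$. In particular, $n_s$ is simultaneously $b$-Niven and $B$-Niven.
   Context: For integers $a$ and $N\ge 1$ with $\gcd(a,N)=1$, $\operatorname{ord}_N(a)$ denotes the least positive integer $\omega$ with $a^\omega\equiv 1\pmod N$ (so $\operatorname{ord}_1(a)=1$). For an integer base $g\ge 2$ and a positive integer $c$ with base-$g$ expansion $c=\sum_{i=0}^{L} d_i g^i$, $d_i\in\{0,1,\dots,g-1\}$, $d_L\neq 0$, the base-$g$ digit sum is $\mathsf{s}_g(c)=\sum_{i=0}^L d_i$. A positive integer $c$ is $g$-Niven if $\mathsf{s}_g(c)\mid c$. *)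

From mathcomp Require Import all_boot.
Set Implicit Arguments. Unset Strict Implicit. Unset Printing Implicit Defensive.

Definition is_ord (N a w : nat) : Prop :=
  [/\ 0 < w, a ^ w = 1 %[mod N]
    & forall v, 0 < v -> a ^ v = 1 %[mod N] -> w <= v].

(* Base-g digit sum, computed by repeated division; the fuel c suffices since
   c %/ g < c for c > 0 and g >= 2. *)
Fixpoint digsum_aux (fuel g c : nat) : nat :=
  match fuel with
  | 0 => 0
  | fuel'.+1 => if c == 0 then 0 else c %% g + digsum_aux fuel' g (c %/ g)
  end.

Definition digit_sum (g c : nat) : nat := digsum_aux c.+1 g c.

Definition niven (g c : nat) : bool := (0 < c) && (digit_sum g c %| c).

From mathcomp Require Import all_boot.

(* In base B the
   number n = \sum_(j < s) B^(j w) has exactly s digits equal to 1, all others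
   0; since B^(j w) = b^(j k w) the same holds in base b, so both digit sums
   are s.  Every term is 1 modulo m s, hence n = s (mod m s): this gives
   n = s = r (mod m) and s %| n.  Only w > 0 and B^w = 1 (mod m s) are
   needed; the coprimality hypotheses merely guarantee that the order exists. *)

Section DigitSum.

Variable g : nat.
Hypothesis g_gt1 : 1 < g.

Lemma digsum_aux_fuel f1 f2 c : c < f1 -> c < f2 ->
  digsum_aux f1 g c = digsum_aux f2 g c.
Proof.
elim: f1 f2 c => [|f1 IH] [|f2] c //= c_lt1 c_lt2.
have [//|c_neq0] := eqVneq c 0.
have c_div_lt : c %/ g < c by rewrite ltn_Pdiv // lt0n.
by congr (_ + _); apply: IH; apply: leq_trans c_div_lt _.
Qed.

Lemma digit_sumD_mul x y : x < g -> digit_sum g (x + g * y) = x + digit_sum g y.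
Proof.
move=> x_lt; rewrite /digit_sum [in LHS]/=.
have [|c_neq0] := eqVneq (x + g * y) 0.
  by move/eqP; rewrite addn_eq0 muln_eq0 (gtn_eqF (ltnW g_gt1)) /= => /andP[/eqP-> /eqP->].
have modE : (x + g * y) %% g = x by rewrite addnC mulnC modnMDl modn_small.
have divE : (x + g * y) %/ g = y.
  by rewrite addnC mulnC divnMDl ?(ltnW g_gt1) // divn_small ?addn0.
rewrite modE divE; congr (_ + _); apply: digsum_aux_fuel => //.
by rewrite -[X in X < _]divE ltn_Pdiv // lt0n.
Qed.

Lemma digit_sum_mulX t y : digit_sum g (g ^ t * y) = digit_sum g y.
Proof.
elim: t => [|t IH]; first by rewrite mul1n.
by rewrite expnS -mulnA -[g * _]add0n digit_sumD_mul // ltnW.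
Qed.

Lemma digit_sum_sum_expM e s : 0 < e ->
  digit_sum g (\sum_(0 <= j < s) g ^ (j * e)) = s.
Proof.
move=> e_gt0; elim: s => [|s IH]; first by rewrite big_geq.
rewrite big_nat_recl // mul0n expn0.
have -> : \sum_(0 <= j < s) g ^ (j.+1 * e)
          = g * (g ^ e.-1 * \sum_(0 <= j < s) g ^ (j * e)).
  rewrite mulnA -expnS prednK // big_distrr /=.
  by apply: eq_bigr => j _; rewrite -expnD mulSn.
by rewrite digit_sumD_mul // digit_sum_mulX IH.
Qed.

End DigitSum.

Lemma sum_expM_mod B w N t : B ^ w = 1 %[mod N] ->
  \sum_(0 <= j < t) B ^ (j * w) = t %[mod N].
Proof.
move=> Bw1; elim: t => [|t IH]; first by rewrite big_geq.
rewrite big_nat_recr //= -modnDm IH modnDm -modnDm.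
by rewrite mulnC expnM -modnXm Bw1 modnXm exp1n modnDm addn1.
Qed.

Lemma dvdn_of_modMl n m s : n = s %[mod m * s] -> s %| n.
Proof.
move/(congr1 (modn^~ s)); rewrite !modn_dvdm ?dvdn_mull // modnn.
by move/eqP.
Qed.

Theorem proposition4p1 (b k m r s w : nat) :
  2 <= b -> 1 <= k -> 1 <= m -> coprime m b -> r < m ->
  1 <= s -> s = r %[mod m] -> coprime s b ->
  is_ord (m * s) (b ^ k) w ->
  let B := b ^ k in
  let n := \sum_(0 <= j < s) B ^ (j * w) in
  [/\ n = r %[mod m],
      digit_sum B n = s /\ digit_sum b n = s,
      s %| n
    & niven b n && niven B n].
Proof.
move=> b_gt1 k_gt0 _ _ _ s_gt0 s_mod_m _ [w_gt0 Bw1 _] B n.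
have B_gt1 : 1 < B by rewrite /B -(exp1n k) ltn_exp2r.
have n_mod_ms : n = s %[mod m * s] by apply: sum_expM_mod.
have n_mod_m : n = r %[mod m].
  by rewrite -(modn_dvdm n (dvdn_mulr s (dvdnn m))) n_mod_ms modn_dvdm ?dvdn_mulr.
have s_dvd_n : s %| n by apply: dvdn_of_modMl n_mod_ms.
have dsB : digit_sum B n = s by apply: digit_sum_sum_expM.
have dsb : digit_sum b n = s.
  rewrite /n (eq_bigr (fun j => b ^ (j * (k * w)))) => [|j _].
    by rewrite digit_sum_sum_expM // muln_gt0 k_gt0.
  by rewrite /B -expnM mulnCA mulnA.
have n_gt0 : 0 < n.
  by rewrite lt0n; apply: contraTneq s_gt0 => n0; rewrite -dsB n0.
by split; rewrite // /niven n_gt0 dsB dsb s_dvd_n.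
Qed.
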